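(* Let $\mathcal L^*$ be the optimal average cost of the original problem and $\mathcal L^*(N)$ the optimal average cost of the truncated problem with truncation level $N$. Then $\lim_{N\to\infty}\mathcal L^*(N)=\mathcal L^*$.
   Context: Fix $p,q\in(0,1)$, $\bar p=1-p$, $\bar q=1-q$. The source $\{X_t\}$ is a Markov chain on $\{0,1\}$ with $\Pr[X_{t+1}=1\mid X_t=0]=p$, $\Pr[X_{t+1}=0\mid X_t=1]=q$; channel i.i.d. Bernoulli with success probability $p_s\in(0,1]$, independent of the source, $p_f=1-p_s$. Actions $A_t\in\{0,1\}$ chosen from the history. Estimate dynamics: if $A_t=1$ and the transmission succeeds then $\hat X_{t+1}=X_{t+1}$, otherwise $\hat X_{t+1}=\hat X_t$. Original problem: age $\Delta_{t+1}=\Delta_t+1$ if $X_{t+1}\ne\hat X_{t+1}$, else $0$; state $S_t=(X_t,\hat X_t,\Delta_t)\in\mathcal S=\{(0,0,0),(1,1,0)\}\cup\{(1,0,\delta),(0,1,\delta):\delta\ge1\}$, $S_1=(0,0,0)$. Truncated problem with level $N$: age $\Delta_{t+1}=\min(\Delta_t+1,N)$ if $X_{t+1}\ne\hat X_{t+1}$, else $0$; state space $\mathcal S_N=\{(0,0,0),(1,1,0)\}\cup\{(1,0,\delta),(0,1,\delta):1\le\delta\le N\}$. In both, per-state cost $c(s)=\beta\delta$ for $s=(1,0,\delta)$, $(1-\beta)\delta$ for $s=(0,1,\delta)$, $0$ for synced states, $\beta\in[0,1]$; per-stage cost $\ell(s,a)=\mathbb E[c(S_{t+1})\mid S_t=s,A_t=a]+\lambda\mathbb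 1\{a=1\}$, $\lambda\ge0$; average cost $\limsup_{T\to\infty}\frac1T\sum_{t=1}^T\mathbb E^\pi[\ell(S_t,A_t)\mid S_1=(0,0,0)]$; optimal values are infima over all admissible policies. *)

From Stdlib Require Import Reals List.
From Coquelicot Require Import Coquelicot.
Open Scope R_scope.

Definition state : Type := (bool * bool * nat)%type.
Definition sx (s : state) : bool := fst (fst s).
Definition sxh (s : state) : bool := snd (fst s).
Definition sd (s : state) : nat := snd s.

Definition s1 : state := (false, false, 0%nat).

(* Pr[X_{t+1} = x' | X_t = x] *)
Definition prob_x (p q : R) (x x' : bool) : R :=
  if x then (if x' then 1 - q else q) else (if x' then p else 1 - p).

Definition prob_c (ps : R) (succ : bool) : R := if succ then ps else 1 - ps.

(* Next state given the age-update rule g (g = S for the original problem,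
   g = fun d => min (d+1) N for the truncated one), the action a, the next
   source value x' and the channel outcome succ. *)
Definition next (g : nat -> nat) (s : state) (a : bool) (x' succ : bool) : state :=
  let xh' := if andb a succ then x' else sxh s in
  let d' := if Bool.eqb x' xh' then 0%nat else g (sd s) in
  (x', xh', d').

Definition age_orig : nat -> nat := S.
Definition age_trunc (N : nat) : nat -> nat := fun d => Nat.min (S d) N.

(* Expectation over (X_{t+1}, channel outcome) given X_t = x. *)
Definition Eout (p q ps : R) (x : bool) (f : bool -> bool -> R) : R :=
  prob_x p q x true * prob_c ps true * f true true
  + prob_x p q x true * prob_c ps false * f true false
  + prob_x p q x false * prob_c ps true * f false true
  + prob_x p q x false * prob_c ps false * f false false.

Definition cost (beta : R) (s : state) : R :=
  match sx s, sxh s with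
  | true, false => beta * INR (sd s)
  | false, true => (1 - beta) * INR (sd s)
  | _, _ => 0
  end.

Definition stage (p q ps beta lam : R) (g : nat -> nat) (s : state) (a : bool) : R :=
  Eout p q ps (sx s) (fun x' c => cost beta (next g s a x' c))
  + (if a then lam else 0).

(* A (possibly randomized, history-dependent) policy: given the past
   history (list of (state, action) pairs, most recent first) and the
   current state, it returns the probability of choosing action 1. *)
Definition policy : Type := list (state * bool) -> state -> R.

Definition admissible (pi : policy) : Prop :=
  forall h s, 0 <= pi h s <= 1.

Fixpoint W (p q ps beta lam : R) (g : nat -> nat) (pi : policy)
         (h : list (state * bool)) (s : state) (k : nat) : R :=
  match k with
  | O => 0
  | S k' =>
      pi h s * (stage p q ps beta lam g s true
                + Eout p q ps (sx s)
                    (fun x' c => W p q ps beta lam g pi ((s, true) :: h)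
                                   (next g s true x' c) k'))
      + (1 - pi h s) * (stage p q ps beta lam g s false
                + Eout p q ps (sx s)
                    (fun x' c => W p q ps beta lam g pi ((s, false) :: h)
                                   (next g s false x' c) k'))
  end.

Definition avg_cost (p q ps beta lam : R) (g : nat -> nat) (pi : policy) : Rbar :=
  LimSup_seq (fun T => W p q ps beta lam g pi nil s1 T / INR T).

Definition opt_cost (p q ps beta lam : R) (g : nat -> nat) : Rbar :=
  Rbar_glb (fun J => exists pi, admissible pi /\ J = avg_cost p q ps beta lam g pi).

Definition Rbar_seq_cv (u : nat -> Rbar) (l : Rbar) : Prop :=
  match l with
  | Finite l => forall eps : R, 0 < eps ->
      exists N0, forall N, (N0 <= N)%nat ->
        exists r, u N = Finite r /\ Rabs (r - l) < eps
  | p_infty => forall M : R, exists N0, forall N, (N0 <= N)%nat -> Rbar_lt (Finite M) (u N)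
  | m_infty => forall M : R, exists N0, forall N, (N0 <= N)%nat -> Rbar_lt (u N) (Finite M)
  end.

From Stdlib Require Import Reals Lra Lia Psatz List.
From Coquelicot Require Import Coquelicot.
Open Scope R_scope.

(* Let r = min(p, q): whenever the estimate is stale, the source moves back to
   it within one step with probability at least r.

   L*(N) <= L*: truncation only lowers ages, hence costs, and the truncated
   chain is the image of the original one under (x, x^, d) |-> (x, x^, min d N).
   Since the true age can be read off the history, any original policy can be
   run on the truncated problem along the same sample paths, at no greater cost.

   L* <= (1 + e) L*(N) for N large: a truncated policy run on the original
   problem through the truncation map pays extra only for ages beyond N.  The
   potential k (d - M)^+, whose slope k = (1 - r) / r bounds the expected
   remaining duration of a desynchronisation, absorbs this excess: the
   original one-step cost plus the expected increase of the potential is at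
   most (1 + e) times the truncated one-step cost as soon as k <= e (M + 1)
   and N is large compared with M.
   Summing over time, the potential telescopes and vanishes in the average. *)

Lemma convex_comb_le (a A0 A1 B0 B1 : R) : 0 <= a <= 1 -> A1 <= B1 -> A0 <= B0 ->
  a * A1 + (1 - a) * A0 <= a * B1 + (1 - a) * B0.
Proof. intros. nra. Qed.

Lemma Rmult_le_of_scaled_le rho c X Y : 0 <= rho <= c -> 0 <= Y -> c * X <= Y -> rho * X <= Y.
Proof. intros. destruct (Rle_dec 0 X); nra. Qed.

Lemma Rinv_INR_nonneg n : 0 <= / INR n.
Proof.
  destruct n as [|n]; [simpl; rewrite Rinv_0; lra|].
  apply Rlt_le, Rinv_0_lt_compat, lt_0_INR; lia.
Qed.

Lemma Rbar_mult_pos_pinfty (c : R) : 0 < c -> Rbar_mult c p_infty = p_infty.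
Proof.
  intros Hc. unfold Rbar_mult, Rbar_mult'.
  repeat match goal with |- context [Rle_dec ?x ?y] => destruct (Rle_dec x y) end; try lra;
  repeat match goal with |- context [Rle_lt_or_eq_dec ?x ?y ?z] =>
    destruct (Rle_lt_or_eq_dec x y z) end; try reflexivity; lra.
Qed.

Lemma Rbar_mult_pos_minfty (c : R) : 0 < c -> Rbar_mult c m_infty = m_infty.
Proof.
  intros Hc. change m_infty with (Rbar_opp p_infty).
  rewrite Rbar_mult_opp_r, Rbar_mult_pos_pinfty; auto.
Qed.

Lemma Rbar_le_mult_pos_inv (c : R) (x y : Rbar) : 0 < c ->
  Rbar_le x (Rbar_mult c y) -> Rbar_le (Rbar_mult (/ c) x) y.
Proof.
  intros Hc Hxy. assert (Hc' : 0 < / c) by (apply Rinv_0_lt_compat; lra).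
  destruct x as [x| |], y as [y| |];
    rewrite ?Rbar_mult_pos_pinfty, ?Rbar_mult_pos_minfty in * by lra; simpl in *; auto.
  apply (Rmult_le_reg_l c); [lra|]. rewrite <- Rmult_assoc, Rinv_r; lra.
Qed.

Lemma LimSup_seq_scal_pos (a : R) (u : nat -> R) : 0 < a ->
  LimSup_seq (fun n => a * u n) = Rbar_mult a (LimSup_seq u).
Proof.
  intros Ha. apply is_LimSup_seq_unique, is_LimSup_seq_scal_pos; auto.
  unfold LimSup_seq. destruct (ex_LimSup_seq u); auto.
Qed.

Lemma Rbar_glb_correct (E : Rbar -> Prop) : Rbar_is_glb E (Rbar_glb E).
Proof. unfold Rbar_glb. destruct (Rbar_ex_glb E); auto. Qed.

Lemma Rbar_glb_le_glb (E1 E2 : Rbar -> Prop) :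
  (forall y, E2 y -> exists x, E1 x /\ Rbar_le x y) -> Rbar_le (Rbar_glb E1) (Rbar_glb E2).
Proof.
  intros Hdom. destruct (Rbar_glb_correct E2) as [_ Hgreatest]. apply Hgreatest.
  intros y Hy. destruct (Hdom y Hy) as [x [Hx Hxy]].
  eapply Rbar_le_trans; [apply (proj1 (Rbar_glb_correct E1)), Hx | exact Hxy].
Qed.

Lemma Rbar_glb_le_glb_scaled (c : R) (E1 E2 : Rbar -> Prop) : 0 < c ->
  (forall y, E2 y -> exists x, E1 x /\ Rbar_le x (Rbar_mult c y)) ->
  Rbar_le (Rbar_mult (/ c) (Rbar_glb E1)) (Rbar_glb E2).
Proof.
  intros Hc Hdom. destruct (Rbar_glb_correct E2) as [_ Hgreatest]. apply Hgreatest.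
  intros y Hy. destruct (Hdom y Hy) as [x [Hx Hxy]]. apply Rbar_le_mult_pos_inv; auto.
  eapply Rbar_le_trans; [apply (proj1 (Rbar_glb_correct E1)), Hx | exact Hxy].
Qed.

Lemma Rbar_seq_cv_squeeze (u : nat -> Rbar) (l : Rbar) :
  (forall n, Rbar_le (u n) l) ->
  (forall e, 0 < e -> exists n0, forall n, (n0 <= n)%nat ->
     Rbar_le (Rbar_mult (/ (1 + e)) l) (u n)) ->
  Rbar_seq_cv u l.
Proof.
  intros Hup Hlow. destruct l as [l| |]; simpl.
  - intros eps Heps. pose proof (Rabs_pos l) as Habs.
    set (e := eps / (Rabs l + 1)).
    assert (He : 0 < e) by (apply Rdiv_lt_0_compat; lra).
    assert (Hel : e * Rabs l < eps).
    { unfold e. apply (Rmult_lt_reg_r (Rabs l + 1)); [lra|].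
      field_simplify; [nra | lra]. }
    destruct (Hlow e He) as [n0 Hn0]. exists n0. intros n Hn.
    specialize (Hup n). specialize (Hn0 n Hn).
    destruct (u n) as [y| |]; simpl in Hup, Hn0; try contradiction.
    exists y. split; auto.
    assert (Hy : l <= (1 + e) * y).
    { apply (Rmult_le_reg_l (/ (1 + e))); [apply Rinv_0_lt_compat; lra|].
      rewrite <- Rmult_assoc, Rinv_l; lra. }
    assert (Hgap : l - y <= e * Rabs l) by (pose proof (Rle_abs l); nra).
    rewrite Rabs_left1; lra.
  - intros B. destruct (Hlow 1 Rlt_0_1) as [n0 Hn0]. exists n0. intros n Hn.
    specialize (Hn0 n Hn). rewrite Rbar_mult_pos_pinfty in Hn0
      by (apply Rinv_0_lt_compat; lra).
    destruct (u n); simpl in *; tauto.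
  - intros B. exists 0%nat. intros n _. specialize (Hup n).
    destruct (u n); simpl in *; tauto.
Qed.

Section Expectation.
Variables p q ps : R.
Hypotheses (Hp : 0 <= p <= 1) (Hq : 0 <= q <= 1) (Hps : 0 <= ps <= 1).

Lemma Eout_le x f g : (forall x' c, f x' c <= g x' c) ->
  Eout p q ps x f <= Eout p q ps x g.
Proof.
  intros Hfg. unfold Eout, prob_x, prob_c.
  destruct x; repeat apply Rplus_le_compat; apply Rmult_le_compat_l;
    try apply Hfg; apply Rmult_le_pos; lra.
Qed.

Lemma Eout_plus x f g :
  Eout p q ps x (fun x' c => f x' c + g x' c) = Eout p q ps x f + Eout p q ps x g.
Proof. unfold Eout; ring. Qed.

Lemma Eout_scal x u f :
  Eout p q ps x (fun x' c => u * f x' c) = u * Eout p q ps x f.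
Proof. unfold Eout; ring. Qed.

End Expectation.

Definition trunc_state (N : nat) (s : state) : state := (fst s, Nat.min (sd s) N).

Lemma next_trunc_state N s a x c :
  next (age_trunc N) (trunc_state N s) a x c = trunc_state N (next age_orig s a x c).
Proof.
  destruct s as [[x0 xh] d]. unfold next, trunc_state, age_trunc, age_orig, sd, sxh.
  cbn [fst snd]. destruct a, c, x, xh; cbn [andb Bool.eqb fst snd]; f_equal; lia.
Qed.

Lemma cost_trunc_state_le beta N s : 0 <= beta <= 1 ->
  cost beta (trunc_state N s) <= cost beta s.
Proof.
  intros Hb. destruct s as [[x xh] d]. unfold cost, trunc_state, sx, sxh, sd; simpl.
  assert (INR (Nat.min d N) <= INR d) by (apply le_INR; lia).
  destruct x, xh; try lra; apply Rmult_le_compat_l; lra.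
Qed.

(* The untruncated age is recoverable from the history of truncated states:
   while desynchronised it grows by one per step, and it starts at [sd s1 = 0]. *)
Fixpoint true_age (h : list (state * bool)) (s : state) : nat :=
  if Bool.eqb (sx s) (sxh s) then 0%nat else
  match h with nil => sd s | (s0, _) :: h' => S (true_age h' s0) end.

Definition restore_state (h : list (state * bool)) (s : state) : state :=
  ((sx s, sxh s), true_age h s).

Fixpoint restore_hist (h : list (state * bool)) : list (state * bool) :=
  match h with nil => nil | (s0, a) :: h' => (restore_state h' s0, a) :: restore_hist h' end.

Definition lift_policy (pi : policy) : policy :=
  fun h s => pi (restore_hist h) (restore_state h s).

Lemma restore_state_next N h s a x c :
  restore_state h (trunc_state N s) = s ->
  restore_state ((trunc_state N s, a) :: h) (trunc_state N (next age_orig s a x c))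
  = next age_orig s a x c.
Proof.
  destruct s as [[x0 xh] d]. unfold restore_state at 1. intros Hs. injection Hs as Hage.
  unfold restore_state, next, trunc_state, age_orig, sd, sx, sxh in *; cbn [fst snd] in *.
  destruct a, c, x, xh; cbn [andb Bool.eqb fst snd true_age]; try reflexivity;
    cbn [fst snd sx sxh Bool.eqb]; rewrite Hage; reflexivity.
Qed.

Section LiftPolicy.
Variables p q ps beta lam : R.
Hypotheses (Hp : 0 <= p <= 1) (Hq : 0 <= q <= 1) (Hps : 0 <= ps <= 1)
  (Hb : 0 <= beta <= 1).
Variable N : nat.
Variable pi : policy.
Hypothesis Hpi : admissible pi.

Local Notation Worig := (W p q ps beta lam age_orig).
Local Notation Wtrunc := (W p q ps beta lam (age_trunc N)).

Lemma stage_trunc_state_le s a :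
  stage p q ps beta lam (age_trunc N) (trunc_state N s) a <= stage p q ps beta lam age_orig s a.
Proof.
  unfold stage. apply Rplus_le_compat_r, Eout_le; auto.
  intros x c. rewrite next_trunc_state. apply cost_trunc_state_le; auto.
Qed.

Lemma W_lift_policy_le T : forall h s, restore_state h (trunc_state N s) = s ->
  Wtrunc (lift_policy pi) h (trunc_state N s) T <= Worig pi (restore_hist h) s T.
Proof.
  induction T as [|T IH]; intros h s Hs; simpl; [lra|].
  replace (lift_policy pi h (trunc_state N s)) with (pi (restore_hist h) s)
    by (unfold lift_policy; rewrite Hs; reflexivity).
  assert (Hhist : forall a, (s, a) :: restore_hist h = restore_hist ((trunc_state N s, a) :: h))
    by (intros a; simpl; rewrite Hs; reflexivity).
  apply convex_comb_le; [apply Hpi| |];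
    (apply Rplus_le_compat; [apply stage_trunc_state_le|]);
    apply Eout_le; auto; intros x c; rewrite next_trunc_state, Hhist;
    apply IH, restore_state_next, Hs.
Qed.

Lemma avg_cost_lift_policy_le :
  Rbar_le (avg_cost p q ps beta lam (age_trunc N) (lift_policy pi))
          (avg_cost p q ps beta lam age_orig pi).
Proof.
  unfold avg_cost. apply LimSup_le. exists 0%nat. intros T _.
  apply Rmult_le_compat_r; [apply Rinv_INR_nonneg|].
  apply (W_lift_policy_le T nil s1). reflexivity.
Qed.

End LiftPolicy.

(* Natural-number subtraction makes this [k * (d - M)^+]. *)
Definition overshoot (k : R) (M d : nat) : R := k * INR (d - M).

Lemma overshoot_nonneg k M d : 0 <= k -> 0 <= overshoot k M d.
Proof. intros Hk. apply Rmult_le_pos; [lra | apply pos_INR]. Qed.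

Lemma overshoot_below k M d : (d <= M)%nat -> overshoot k M d = 0.
Proof. intros HdM. unfold overshoot. replace (d - M)%nat with 0%nat by lia. simpl; ring. Qed.

Lemma overshoot_above k M d : (M <= d)%nat -> overshoot k M d = k * (INR d - INR M).
Proof. intros HMd. unfold overshoot. rewrite minus_INR; auto. Qed.

Section Overshoot.
Variables (e k r : R) (M N : nat).
Hypotheses (He : 0 < e) (Hr : 0 < r) (Hk : 0 <= k) (Hkr : k * r = 1 - r).
Hypotheses (HMN : (M <= N)%nat) (HkM : k <= e * (INR M + 1))
  (HN : k + (1 - r) * INR M <= (1 - r) * INR N).

(* Up to age [M] nothing is truncated and the potential vanishes; between [M]
   and [N] its increase [k] is paid by the margin [e (d + 1) >= e (M + 1) >= k];
   beyond [N] the identity [(1 - r) (1 + k) = k] turns the truncated-away age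
   into the expected drop of the potential. *)
Lemma overshoot_drift d rho : 0 <= rho <= 1 - r ->
  rho * (INR (S d) + overshoot k M (S d) - (1 + e) * INR (Nat.min (S d) N))
  <= overshoot k M d.
Proof.
  intros Hrho. rewrite S_INR.
  destruct (Compare_dec.le_lt_dec (S d) M) as [HdM|HMd].
  - rewrite !overshoot_below by lia.
    replace (Nat.min (S d) N) with (S d) by lia. rewrite S_INR.
    assert (0 <= rho * (e * (INR d + 1))) by (pose proof (pos_INR d); apply Rmult_le_pos; nra).
    lra.
  - rewrite !overshoot_above by lia. rewrite S_INR.
    assert (HMd' : INR M <= INR d) by (apply le_INR; lia).
    assert (Hr1 : 0 <= 1 - r) by nra.
    assert (Hover : 0 <= k * (INR d - INR M)) by nra.
    apply (Rmult_le_of_scaled_le rho (1 - r)); [lra | lra |].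
    destruct (Compare_dec.le_lt_dec (S d) N) as [HdN|HNd].
    + replace (Nat.min (S d) N) with (S d) by lia. rewrite S_INR.
      assert (Hslope : k - e * (INR d + 1) <= 0) by nra.
      assert (0 <= r * (k * (INR d - INR M))) by (apply Rmult_le_pos; lra).
      assert ((1 - r) * (k - e * (INR d + 1)) <= 0) by nra.
      nra.
    + replace (Nat.min (S d) N) with N by lia.
      assert (0 <= (1 - r) * (e * INR N)) by (pose proof (pos_INR N); apply Rmult_le_pos; nra).
      nra.
Qed.

End Overshoot.

Definition potential (beta k : R) (M : nat) (s : state) : R :=
  match sx s, sxh s with
  | true, false => beta * overshoot k M (sd s)
  | false, true => (1 - beta) * overshoot k M (sd s)
  | _, _ => 0
  end.

Lemma potential_nonneg beta k M s : 0 <= beta <= 1 -> 0 <= k -> 0 <= potential beta k M s.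
Proof.
  intros Hb Hk. destruct s as [[x xh] d]. unfold potential, sx, sxh, sd; simpl.
  pose proof (overshoot_nonneg k M d Hk). destruct x, xh; try lra; apply Rmult_le_pos; lra.
Qed.

Definition age_consistent (s : state) : Prop := sx s = sxh s -> sd s = 0%nat.

Lemma next_age_consistent g s a x c : age_consistent (next g s a x c).
Proof.
  unfold age_consistent, next, sx, sxh, sd; cbn [fst snd]. intros Hsync.
  destruct (Bool.eqb _ _) eqn:E; auto.
  apply Bool.eqb_false_iff in E. contradiction.
Qed.

Definition project_policy (N : nat) (sigma : policy) : policy :=
  fun h s => sigma (map (fun u => (trunc_state N (fst u), snd u)) h) (trunc_state N s).

Section ProjectPolicy.
Variables p q ps beta lam : R.
Hypotheses (Hp : 0 <= p <= 1) (Hq : 0 <= q <= 1) (Hps : 0 <= ps <= 1)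
  (Hb : 0 <= beta <= 1) (Hl : 0 <= lam).
Variables (e k r : R) (M N : nat).
Hypotheses (He : 0 < e) (Hr : 0 < r) (Hk : 0 <= k) (Hkr : k * r = 1 - r).
Hypotheses (HM1 : (1 <= M)%nat) (HMN : (M <= N)%nat) (HkM : k <= e * (INR M + 1))
  (HN : k + (1 - r) * INR M <= (1 - r) * INR N).
Hypotheses (Hrp : r <= p) (Hrq : r <= q).

Local Notation Phi := (potential beta k M).
Local Notation Worig := (W p q ps beta lam age_orig).
Local Notation Wtrunc := (W p q ps beta lam (age_trunc N)).

Lemma overshoot_drift_desync w rho d : 0 <= w -> 0 <= rho <= 1 - r ->
  rho * (w * INR (S d) + w * overshoot k M (S d))
  <= w * overshoot k M d + (1 + e) * (rho * (w * INR (Nat.min (S d) N))).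
Proof.
  intros Hw Hrho.
  pose proof (Rmult_le_compat_l w _ _ Hw
    (overshoot_drift e k r M N He Hr Hk Hkr HMN HkM HN d rho Hrho)).
  lra.
Qed.

Lemma overshoot_drift_sync w rho : 0 <= w -> 0 <= rho ->
  rho * (w * INR 1 + w * overshoot k M 1) <= (1 + e) * (rho * (w * INR (Nat.min 1 N))).
Proof.
  intros Hw Hrho. rewrite overshoot_below by lia.
  replace (Nat.min 1 N) with 1%nat by lia. simpl.
  assert (0 <= rho * w * e) by (apply Rmult_le_pos; [apply Rmult_le_pos|]; lra).
  lra.
Qed.

(* Each case names the probability [rho] of being desynchronised at the next
   step and the weight [w] of the cost of that desynchronisation. *)
Lemma potential_drift s a : age_consistent s ->
  Eout p q ps (sx s) (fun x c => cost beta (next age_orig s a x c) + Phi (next age_orig s a x c))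
  <= Phi s
     + (1 + e) * Eout p q ps (sx s) (fun x c => cost beta (trunc_state N (next age_orig s a x c))).
Proof.
  destruct s as [[x0 xh] d]. intros Hcons.
  destruct x0, xh, a; unfold Eout, prob_x, prob_c, next, cost, potential, trunc_state,
    age_consistent, sx, sxh, sd, age_orig in *; cbn [fst snd andb Bool.eqb] in *;
    try rewrite (Hcons eq_refl).
  - pose proof (overshoot_drift_sync (1 - beta) (q * (1 - ps)) ltac:(lra) ltac:(nra)). lra.
  - pose proof (overshoot_drift_sync (1 - beta) q ltac:(lra) ltac:(lra)). lra.
  - pose proof (overshoot_drift_desync beta ((1 - q) * (1 - ps)) d
      ltac:(lra) ltac:(split; nra)). lra.
  - pose proof (overshoot_drift_desync beta (1 - q) d ltac:(lra) ltac:(lra)). lra.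
  - pose proof (overshoot_drift_desync (1 - beta) ((1 - p) * (1 - ps)) d
      ltac:(lra) ltac:(split; nra)). lra.
  - pose proof (overshoot_drift_desync (1 - beta) (1 - p) d ltac:(lra) ltac:(lra)). lra.
  - pose proof (overshoot_drift_sync beta (p * (1 - ps)) ltac:(lra) ltac:(nra)). lra.
  - pose proof (overshoot_drift_sync beta p ltac:(lra) ltac:(lra)). lra.
Qed.

Variable sigma : policy.
Hypothesis Hsig : admissible sigma.

Local Notation trunc_hist := (map (fun u => (trunc_state N (fst u), snd u))).

Lemma W_project_policy_step T h s a :
  (forall h s', age_consistent s' ->
     Worig (project_policy N sigma) h s' T
     <= (1 + e) * Wtrunc sigma (trunc_hist h) (trunc_state N s') T + Phi s') ->
  age_consistent s ->
  stage p q ps beta lam age_orig s a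
  + Eout p q ps (sx s) (fun x c =>
      Worig (project_policy N sigma) ((s, a) :: h) (next age_orig s a x c) T)
  <= (1 + e) * (stage p q ps beta lam (age_trunc N) (trunc_state N s) a
  + Eout p q ps (sx s) (fun x c =>
      Wtrunc sigma (trunc_hist ((s, a) :: h)) (next (age_trunc N) (trunc_state N s) a x c) T))
  + Phi s.
Proof.
  intros IH Hcons.
  assert (Hfuture : Eout p q ps (sx s) (fun x c =>
      Worig (project_policy N sigma) ((s, a) :: h) (next age_orig s a x c) T)
    <= (1 + e) * Eout p q ps (sx s) (fun x c =>
      Wtrunc sigma (trunc_hist ((s, a) :: h)) (next (age_trunc N) (trunc_state N s) a x c) T)
    + Eout p q ps (sx s) (fun x c => Phi (next age_orig s a x c))).
  { rewrite <- Eout_scal, <- Eout_plus. apply Eout_le; auto. intros x c.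
    rewrite next_trunc_state. apply IH, next_age_consistent. }
  pose proof (potential_drift s a Hcons) as Hdrift. rewrite Eout_plus in Hdrift.
  assert (Hlam : (if a then lam else 0) <= (1 + e) * (if a then lam else 0)) by (destruct a; nra).
  assert (Hcost :
    Eout p q ps (sx s) (fun x c => cost beta (next (age_trunc N) (trunc_state N s) a x c))
    = Eout p q ps (sx s) (fun x c => cost beta (trunc_state N (next age_orig s a x c))))
    by (unfold Eout; rewrite !next_trunc_state; reflexivity).
  unfold stage. change (sx (trunc_state N s)) with (sx s). rewrite Hcost. lra.
Qed.

Lemma W_project_policy_le T : forall h s, age_consistent s ->
  Worig (project_policy N sigma) h s T
  <= (1 + e) * Wtrunc sigma (trunc_hist h) (trunc_state N s) T + Phi s.
Proof.
  induction T as [|T IH]; intros h s Hcons; simpl.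
  - pose proof (potential_nonneg beta k M s Hb Hk). lra.
  - change (project_policy N sigma h s) with (sigma (trunc_hist h) (trunc_state N s)).
    eapply Rle_trans.
    + apply convex_comb_le; [apply Hsig | apply W_project_policy_step; auto
                                        | apply W_project_policy_step; auto].
    + right. change (sx (trunc_state N s)) with (sx s). cbn [map fst snd]. ring.
Qed.

Lemma avg_cost_project_policy_le :
  Rbar_le (avg_cost p q ps beta lam age_orig (project_policy N sigma))
          (Rbar_mult (1 + e) (avg_cost p q ps beta lam (age_trunc N) sigma)).
Proof.
  unfold avg_cost. rewrite <- LimSup_seq_scal_pos by lra.
  apply LimSup_le. exists 0%nat. intros T _.
  pose proof (W_project_policy_le T nil s1 ltac:(intros _; reflexivity)) as HW.
  change (Phi s1) with 0 in HW. change (trunc_state N s1) with s1 in HW.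
  pose proof (Rinv_INR_nonneg T).
  unfold Rdiv. rewrite <- Rmult_assoc. apply Rmult_le_compat_r; simpl in HW; lra.
Qed.

End ProjectPolicy.

Lemma drift_constants_exist (e r : R) : 0 < e -> 0 < r < 1 ->
  exists M N0, (1 <= M)%nat /\ (1 - r) / r <= e * (INR M + 1) /\
    forall N, (N0 <= N)%nat -> (M <= N)%nat /\ (1 - r) / r + (1 - r) * INR M <= (1 - r) * INR N.
Proof.
  intros He Hr. set (k := (1 - r) / r).
  destruct (INR_unbounded (k / e)) as [M0 HM0].
  destruct (INR_unbounded ((k + (1 - r) * INR (S M0)) / (1 - r))) as [N1 HN1].
  exists (S M0), (Nat.max N1 (S M0)). split; [lia | split].
  - apply Rmult_gt_compat_l with (r := e) in HM0; [|lra].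
    replace (e * (k / e)) with k in HM0 by (field; lra). rewrite S_INR. nra.
  - intros N HN. split; [lia|].
    assert (INR N1 <= INR N) by (apply le_INR; lia).
    apply Rmult_gt_compat_l with (r := 1 - r) in HN1; [|lra].
    replace ((1 - r) * ((k + (1 - r) * INR (S M0)) / (1 - r))) with (k + (1 - r) * INR (S M0))
      in HN1 by (field; lra).
    nra.
Qed.

Lemma opt_cost_trunc_le p q ps beta lam N :
  0 <= p <= 1 -> 0 <= q <= 1 -> 0 <= ps <= 1 -> 0 <= beta <= 1 ->
  Rbar_le (opt_cost p q ps beta lam (age_trunc N)) (opt_cost p q ps beta lam age_orig).
Proof.
  intros Hp Hq Hps Hb. apply Rbar_glb_le_glb. intros J [pi [Hpi ->]].
  exists (avg_cost p q ps beta lam (age_trunc N) (lift_policy pi)). split.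
  - exists (lift_policy pi). split; [intros h s; apply Hpi | reflexivity].
  - apply avg_cost_lift_policy_le; auto.
Qed.

Lemma opt_cost_orig_le_trunc p q ps beta lam e :
  0 < p < 1 -> 0 < q < 1 -> 0 <= ps <= 1 -> 0 <= beta <= 1 -> 0 <= lam -> 0 < e ->
  exists N0, forall N, (N0 <= N)%nat ->
  Rbar_le (Rbar_mult (/ (1 + e)) (opt_cost p q ps beta lam age_orig))
          (opt_cost p q ps beta lam (age_trunc N)).
Proof.
  intros Hp Hq Hps Hb Hl He.
  set (r := Rmin p q).
  assert (Hr : 0 < r < 1).
  { unfold r. split; [apply Rmin_glb_lt; lra | apply (Rle_lt_trans _ p); [apply Rmin_l | lra]]. }
  destruct (drift_constants_exist e r He Hr) as [M [N0 [HM1 [HkM HN0]]]].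
  exists N0. intros N HN. destruct (HN0 N HN) as [HMN HNM].
  apply Rbar_glb_le_glb_scaled; [lra|]. intros J [sigma [Hsig ->]].
  exists (avg_cost p q ps beta lam age_orig (project_policy N sigma)). split.
  - exists (project_policy N sigma). split; [intros h s; apply Hsig | reflexivity].
  - assert (Hk : 0 <= (1 - r) / r)
      by (apply Rmult_le_pos; [lra | apply Rlt_le, Rinv_0_lt_compat; lra]).
    assert (Hkr : (1 - r) / r * r = 1 - r) by (field; lra).
    apply (avg_cost_project_policy_le p q ps beta lam) with (k := (1 - r) / r) (r := r) (M := M);
      auto; try lra; [apply Rmin_l | apply Rmin_r].
Qed.

Theorem theorem4 (p q ps beta lam : R) :
  0 < p < 1 -> 0 < q < 1 -> 0 < ps <= 1 -> 0 <= beta <= 1 -> 0 <= lam ->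
  Rbar_seq_cv (fun N => opt_cost p q ps beta lam (age_trunc N))
              (opt_cost p q ps beta lam age_orig).
Proof.
  intros Hp Hq Hps Hb Hl. apply Rbar_seq_cv_squeeze.
  - intros N. apply opt_cost_trunc_le; lra.
  - intros e He. apply opt_cost_orig_le_trunc; lra.
Qed.
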